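(* Let $\ket{\psi}$ be an $n$-qubit pure state and let $\mathbf{z}\in\{0,1\}^n$ satisfy $p_\psi(\mathbf{z})>0$. Let $P$ be any partition of $[n]$ such that $\ket{\psi}=\bigotimes_{\alpha\in P}\ket{\psi_\alpha}$ for pure states $\ket{\psi_\alpha}$ on the qubits in $\alpha$. Then for every block $\alpha\in P$, the Hamming weight of the substring $\mathbf{z}_\alpha=(z_i)_{i\in\alpha}$ is even. Equivalently, $\ket{\psi}$ cannot be a product with respect to any partition having a block on which the restriction of $\mathbf{z}$ has odd Hamming weight.
   Context: Parallelized controlled-SWAP test: for an $n$-qubit state $\ket{\psi}$, take two copies $\ket{\psi}^{\otimes 2}$ and let $\mathbb{F}^{(i)}$ denote the swap operator exchanging the $i$-th qubit of the first copy with the $i$-th qubit of the second copy. The probability of the outcome bitstring $\mathbf{z}\in\{0,1\}^n$ is $p_\psi(\mathbf{z})=\mathrm{Tr}\big[\big(\bigotimes_{i=1}^n\tfrac12(\mathbb{1}+(-1)^{z_i}\mathbb{F}^{(i)})\big)(\ket{\psi}\!\bra{\psi})^{\otimes 2}\big]$. *)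

From HB Require Import structures.
From mathcomp Require Import all_boot all_order all_algebra.
Set Implicit Arguments. Unset Strict Implicit. Unset Printing Implicit Defensive.
Import Order.TTheory GRing.Theory Num.Theory.
Local Open Scope ring_scope.

Definition bits (n : nat) := {ffun 'I_n -> bool}.

Definition is_state (C : numClosedFieldType) (n : nat) (psi : bits n -> C) : Prop :=
  \sum_(x : bits n) `|psi x| ^+ 2 = 1.

(* local factor (qubit i) of the operator
   (x) _i 1/2 (1 + (-1)^{z_i} F^(i)) acting on two copies;
   matrix element <a| . |b>, a, b : basis of the two copies *)
Definition loc_proj (C : numClosedFieldType) (n : nat) (z : bits n) (i : 'I_n)
    (a b : bits n * bits n) : C :=
  2^-1 * (((a.1 i == b.1 i) && (a.2 i == b.2 i))%:R
          + (-1) ^+ z i * ((a.1 i == b.2 i) && (a.2 i == b.1 i))%:R).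

Definition proj_z (C : numClosedFieldType) (n : nat) (z : bits n)
    (a b : bits n * bits n) : C :=
  \prod_(i < n) loc_proj C z i a b.

Definition rho2 (C : numClosedFieldType) (n : nat) (psi : bits n -> C)
    (b a : bits n * bits n) : C :=
  psi b.1 * psi b.2 * (psi a.1 * psi a.2)^*.

Definition pswap (C : numClosedFieldType) (n : nat) (psi : bits n -> C) (z : bits n) : C :=
  \sum_(a : bits n * bits n) \sum_(b : bits n * bits n) proj_z C z a b * rho2 psi b a.

(* a state on the qubits of alpha, encoded as a function of the full string
   that depends only on the restriction to alpha, normalised over the
   assignments of the qubits in alpha *)
Definition is_local_state (C : numClosedFieldType) (n : nat) (alpha : {set 'I_n})
    (phi : bits n -> C) : Prop :=
  (forall x y : bits n, {in alpha, forall i, x i = y i} -> phi x = phi y) /\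
  \sum_(x : bits n | [forall i, (i \notin alpha) ==> ~~ x i]) `|phi x| ^+ 2 = 1.

Definition product_wrt (C : numClosedFieldType) (n : nat) (P : {set {set 'I_n}})
    (psi : bits n -> C) : Prop :=
  exists phi : {set 'I_n} -> bits n -> C,
    (forall alpha, alpha \in P -> is_local_state alpha (phi alpha)) /\
    (forall x : bits n, psi x = \prod_(alpha in P) phi alpha x).

Definition hw_on (n : nat) (z : bits n) (alpha : {set 'I_n}) : nat :=
  #|[set i in alpha | z i]|.

From HB Require Import structures.
From mathcomp Require Import all_boot all_order all_algebra.
From mathcomp Require Import ring.
Import Order.TTheory GRing.Theory Num.Theory.
Local Open Scope ring_scope.

(* Exchanging the two copies on the qubits of a block [alpha] multiplies the
   projector by (-1)^|z_alpha|, one sign per swapped qubit with z_i = 1, but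
   leaves (|psi><psi|)^(x)2 unchanged when psi is a product over a partition
   containing alpha.  Reindexing the trace by this involution therefore gives
   p_psi(z) = (-1)^|z_alpha| p_psi(z), so p_psi(z) > 0 forces |z_alpha| even. *)

Section SwapOn.

Context {n : nat}.
Implicit Types (alpha beta : {set 'I_n}) (x y : bits n) (p : bits n * bits n).

Definition swap_on alpha p : bits n * bits n :=
  ([ffun i => if i \in alpha then p.2 i else p.1 i],
   [ffun i => if i \in alpha then p.1 i else p.2 i]).

Lemma swap_onK alpha : involutive (swap_on alpha).
Proof.
by case=> x y; congr pair; apply/ffunP => i; rewrite !ffunE; case: (i \in alpha).
Qed.

Lemma swap_on_disjoint alpha beta p i :
  [disjoint beta & alpha] -> i \in beta ->
  ((swap_on alpha p).1 i = p.1 i) * ((swap_on alpha p).2 i = p.2 i).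
Proof. by move=> dis_ba i_b; rewrite !ffunE (disjointFr dis_ba i_b). Qed.

Lemma swap_on_sub alpha beta p i :
  beta \subset alpha -> i \in beta ->
  ((swap_on alpha p).1 i = p.2 i) * ((swap_on alpha p).2 i = p.1 i).
Proof. by move=> /subsetP sba i_b; rewrite !ffunE sba. Qed.

Context {C : numClosedFieldType}.

Lemma loc_proj_swap_on (z : bits n) alpha i a b :
  loc_proj C z i a (swap_on alpha b) =
  (-1) ^+ ((i \in alpha) && z i) * loc_proj C z i a b.
Proof.
by rewrite /loc_proj !ffunE; case: (i \in alpha); case: (z i); rewrite /=; ring.
Qed.

Lemma proj_z_swap_on (z : bits n) alpha a b :
  proj_z C z a (swap_on alpha b) = (-1) ^+ hw_on z alpha * proj_z C z a b.
Proof.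
rewrite /proj_z (eq_bigr _ (fun i _ => loc_proj_swap_on z alpha i a b)).
rewrite big_split /= -prodr_const /hw_on; congr (_ * _).
rewrite (eq_bigr (fun i => if (i \in alpha) && z i then -1 else 1)) -?big_mkcond.
  by apply: eq_bigl => i; rewrite inE.
by move=> i _; case: ifP.
Qed.

Lemma local_state_swap_on alpha beta (phi : bits n -> C) p :
  is_local_state beta phi -> (beta \subset alpha) || [disjoint beta & alpha] ->
  phi (swap_on alpha p).1 * phi (swap_on alpha p).2 = phi p.1 * phi p.2.
Proof.
move=> [phi_loc _] /orP[sba | dis_ba].
  by rewrite mulrC; congr (_ * _); apply: phi_loc => i /(swap_on_sub _ _ p _ sba) ->.
by congr (_ * _); apply: phi_loc => i /(swap_on_disjoint _ _ p _ dis_ba) ->.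
Qed.

Lemma product_wrt_swap_on {P : {set {set 'I_n}}} {alpha} {psi : bits n -> C} :
  trivIset P -> alpha \in P -> product_wrt P psi -> forall p,
  psi (swap_on alpha p).1 * psi (swap_on alpha p).2 = psi p.1 * psi p.2.
Proof.
move=> triP alpha_P [phi [phi_loc psiE]] p.
rewrite !psiE -!big_split /=; apply: eq_bigr => beta beta_P.
apply: local_state_swap_on; first exact: phi_loc.
have [-> | neq_ba] := eqVneq beta alpha; first by rewrite subxx.
by rewrite (trivIsetP triP) ?orbT.
Qed.

Lemma pswap_swap_on (psi : bits n -> C) (z : bits n) alpha :
  (forall p, psi (swap_on alpha p).1 * psi (swap_on alpha p).2 = psi p.1 * psi p.2) ->
  pswap psi z = (-1) ^+ hw_on z alpha * pswap psi z.
Proof.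
move=> psi_swap; rewrite /pswap mulr_sumr; apply: eq_bigr => a _.
rewrite [LHS](reindex_inj (inv_inj (swap_onK alpha))) mulr_sumr.
apply: eq_bigr => b _ /=.
by rewrite proj_z_swap_on /rho2 psi_swap [RHS]mulrA.
Qed.

End SwapOn.

Theorem proposition3 (C : numClosedFieldType) (n : nat) (psi : bits n -> C)
    (z : bits n) (P : {set {set 'I_n}}) :
  is_state psi ->
  0 < pswap psi z ->
  partition P [set: 'I_n] ->
  product_wrt P psi ->
  forall alpha, alpha \in P -> ~~ odd (hw_on z alpha).
Proof.
move=> _ pswap_gt0 /and3P[_ triP _] psi_prod alpha alpha_P.
apply/negP => odd_hw.
have := pswap_swap_on psi z alpha (product_wrt_swap_on triP alpha_P psi_prod).
rewrite -signr_odd odd_hw expr1 mulN1r => pswapN.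
by have := pswap_gt0; rewrite {1}pswapN oppr_gt0 => /lt_trans/(_ pswap_gt0); rewrite ltxx.
Qed.
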